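(* Let $\Lambda$ be a left cancellative small category. Consider the conditions: (1) $\sim_1=\sim_2$ on $\mathcal Z*X$; (2) for every $v\in\Lambda^0$, every nonempty $E\in\mathcal A_v$, every $\alpha\in E$, and every invertible $\mu\in\Lambda$ with $r(\mu)=s(\mu)=s(\alpha)$ and $\mu\ne s(\alpha)$, there is $\beta\in s(\alpha)\Lambda$ such that $\alpha\beta\in E$ and either $\mu\beta\notin\beta\Lambda$ or $\mu^{-1}\beta\notin\beta\Lambda$. Then (2) implies (1). If moreover $\Lambda$ is right cancellative, then (1) implies (2).
   Context: A left cancellative small category (LCSC) is a small category $\Lambda$ such that $\alpha\beta=\alpha\gamma$ implies $\beta=\gamma$; right cancellative means $\beta\alpha=\gamma\alpha$ implies $\beta=\gamma$. Composition $\alpha\beta$ is defined when $s(\alpha)=r(\beta)$; $\Lambda^0$ is the set of objects (identity morphisms); $v\Lambda=\{\alpha:r(\alpha)=v\}$; $\alpha\Lambda=\{\alpha\beta:r(\beta)=s(\alpha)\}$. For $\alpha\in\Lambda$, $\tau^\alpha(\beta)=\alpha\beta$ on $s(\alpha)\Lambda$ and $\sigma^\alpha:\alpha\Lambda\to s(\alpha)\Lambda$ is its inverse. A zigzag is a tuple $\zeta=(\alpha_1,\beta_1,\dots,\alpha_n,\beta_n)$ with $r(\alpha_i)=r(\beta_i)$ and $s(\alpha_{i+1})=s(\beta_i)$; $\mathcal Z$ is the set of zigzags, $s(\zeta)=s(\beta_n)$, $r(\zeta)=s(\alpha_1)$, $\mathcal Zv=\{\zeta:s(\zeta)=v\}$,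 $\overline\zeta=(\beta_n,\alpha_n,\dots,\beta_1,\alpha_1)$. The zigzag map $\varphi_\zeta=\sigma^{\alpha_1}\circ\tau^{\beta_1}\circ\cdots\circ\sigma^{\alpha_n}\circ\tau^{\beta_n}$ (partial injective map) has domain $A(\zeta)\subseteq s(\zeta)\Lambda$ and range $A(\overline\zeta)$. $\mathcal D^{(0)}_v$ is the set of nonempty $A(\zeta)$, $\zeta\in\mathcal Zv$; $\mathcal A_v$ is the ring of subsets of $v\Lambda$ generated by $\mathcal D^{(0)}_v$. $X_v$ is the set of ultrafilters of $\mathcal A_v$ ($\mathcal U_x$ denoting the ultrafilter $x$), with compact open basic sets $\widehat E=\{x:E\in\mathcal U_x\}$; $X=\bigsqcup_vX_v$, $r(x)=v$ for $x\in X_v$. For $x\in\widehat{A(\zeta)}$, $\Phi_\zeta(x)$ is the ultrafilter of $\mathcal A_{r(\zeta)}$ generated by $\{\varphi_\zeta(E\cap A(\zeta)):E\in\mathcal U_x\}$; $\Phi_\zeta:\widehat{A(\zeta)}\to\widehat{A(\overline\zeta)}$ is a homeomorphism. On $\mathcal Z*X=\{(\zeta,x):s(\zeta)=r(x),\ x\in\widehat{A(\zeta)}\}$: $(\zeta,x)\sim_1(\zeta',x')$ iff $x=x'$ and $\Phi_\zeta|_{\widehat E}=\Phi_{\zeta'}|_{\widehat E}$ for some $E\in\mathcal U_x$; $(\zeta,x)\sim_2(\zeta',x')$ iff $x=x'$ and $\varphi_\zeta|_E=\varphi_{\zeta'}|_E$ for some $E\in\mathcal U_x$. *)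

From Stdlib Require Import List.
Import ListNotations.

(** A small category: objects, morphisms, range r, source s, identities,
    and a total composition function that is meaningful when s a = r b. *)
Record SmallCat := {
  Obj : Type;
  Mor : Type;
  rng : Mor -> Obj;
  src : Mor -> Obj;
  idm : Obj -> Mor;                 (* Lambda^0 as identity morphisms *)
  comp : Mor -> Mor -> Mor;         (* comp a b = a b, defined when src a = rng b *)
  rng_id : forall v, rng (idm v) = v;
  src_id : forall v, src (idm v) = v;
  rng_comp : forall a b, src a = rng b -> rng (comp a b) = rng a;
  src_comp : forall a b, src a = rng b -> src (comp a b) = src b;
  comp_id_l : forall a, comp (idm (rng a)) a = a;
  comp_id_r : forall a, comp a (idm (src a)) = a;
  comp_assoc : forall a b c, src a = rng b -> src b = rng c ->
      comp a (comp b c) = comp (comp a b) c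
}.

Arguments rng {_}. Arguments src {_}. Arguments idm {_}. Arguments comp {_}.

Section Defs.
Variable L : SmallCat.
Notation M := (Mor L).
Notation O := (Obj L).

Definition LeftCancellative : Prop :=
  forall a b c : M, src a = rng b -> src a = rng c -> comp a b = comp a c -> b = c.

Definition RightCancellative : Prop :=
  forall a b c : M, src b = rng a -> src c = rng a -> comp b a = comp c a -> b = c.

Definition IsInverse (mu nu : M) : Prop :=
  src mu = rng nu /\ src nu = rng mu /\
  comp mu nu = idm (rng mu) /\ comp nu mu = idm (src mu).

Definition Invertible (mu : M) : Prop := exists nu, IsInverse mu nu.

Definition InRightIdeal (b g : M) : Prop :=
  exists d, rng d = src b /\ g = comp b d.

(** A zigzag (a1,b1,...,an,bn), n >= 1, is represented as
    (p, l) standing for the nonempty list p :: l of pairs (a_i, b_i). *)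
Definition Zigzag : Type := ((M * M) * list (M * M))%type.

Definition zlist (z : Zigzag) : list (M * M) := fst z :: snd z.

Fixpoint zz_wf (l : list (M * M)) : Prop :=
  match l with
  | [] => True
  | [(a, b)] => rng a = rng b
  | (a, b) :: (((a', b') :: _) as t) => rng a = rng b /\ src a' = src b /\ zz_wf t
  end.

Definition IsZigzag (z : Zigzag) : Prop := zz_wf (zlist z).

(** s(zeta) = s(b_n), r(zeta) = s(a_1) *)
Definition zsrc (z : Zigzag) : O := src (snd (last (snd z) (fst z))).
Definition zrng (z : Zigzag) : O := src (fst (fst z)).

Definition zbar (z : Zigzag) : Zigzag :=
  match rev (map (fun p => (snd p, fst p)) (zlist z)) with
  | [] => z
  | p :: l => (p, l)
  end.

(** one step sigma^a o tau^b as a partial map (graph): y |-> z with a z = b y *)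
Definition zstep (a b y z : M) : Prop :=
  rng y = src b /\ rng z = src a /\ comp a z = comp b y.

(** graph of sigma^{a1} o tau^{b1} o ... o sigma^{an} o tau^{bn}:
    the rightmost step (a_n, b_n) is applied first *)
Fixpoint zmap (l : list (M * M)) (x w : M) : Prop :=
  match l with
  | [] => x = w
  | (a, b) :: t => exists y, zmap t x y /\ zstep a b y w
  end.

Definition phi (z : Zigzag) : M -> M -> Prop := zmap (zlist z).

Definition Adom (z : Zigzag) (x : M) : Prop := exists w, phi z x w.

Definition Sub (E F : M -> Prop) : Prop := forall a, E a -> F a.
Definition SetEq (E F : M -> Prop) : Prop := forall a, E a <-> F a.
Definition NonEmpty (E : M -> Prop) : Prop := exists a, E a.

Definition D0 (v : O) (E : M -> Prop) : Prop :=
  exists z, IsZigzag z /\ zsrc z = v /\ NonEmpty (Adom z) /\ SetEq E (Adom z).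

Inductive RingGen (v : O) : (M -> Prop) -> Prop :=
| rg_gen : forall E, D0 v E -> RingGen v E
| rg_empty : RingGen v (fun _ => False)
| rg_union : forall E F, RingGen v E -> RingGen v F ->
    RingGen v (fun a => E a \/ F a)
| rg_diff : forall E F, RingGen v E -> RingGen v F ->
    RingGen v (fun a => E a /\ ~ F a).

(** A_v (closed under extensional equality of subsets) *)
Definition Av (v : O) (E : M -> Prop) : Prop :=
  exists E', RingGen v E' /\ SetEq E E'.

Definition IsFilter (v : O) (U : (M -> Prop) -> Prop) : Prop :=
  (exists E, U E) /\
  (forall E, U E -> Av v E /\ NonEmpty E) /\
  (forall E F, U E -> U F -> U (fun a => E a /\ F a)) /\
  (forall E F, U E -> Av v F -> Sub E F -> U F).

Definition IsUltrafilter (v : O) (U : (M -> Prop) -> Prop) : Prop :=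
  IsFilter v U /\
  (forall U', IsFilter v U' -> (forall E, U E -> U' E) -> forall E, U' E -> U E).

(** X = disjoint union of the X_v; a point is a pair (v, U) with U an
    ultrafilter of A_v, r(x) = v.  x \in E-hat iff U E. *)

(** Phi_zeta(x): the ultrafilter of A_{r(zeta)} generated by
    { phi_zeta(E \cap A(zeta)) : E \in U_x } *)
Definition PhiFam (z : Zigzag) (U : (M -> Prop) -> Prop) (F : M -> Prop) : Prop :=
  Av (zrng z) F /\
  exists E, U E /\ Sub (fun b => exists a, E a /\ Adom z a /\ phi z a b) F.

(** (zeta, x) \in Z * X, x = (v, U) *)
Definition InZX (z : Zigzag) (v : O) (U : (M -> Prop) -> Prop) : Prop :=
  IsZigzag z /\ zsrc z = v /\ IsUltrafilter v U /\ U (Adom z).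

Definition Sim1 (z z' : Zigzag) (v : O) (U : (M -> Prop) -> Prop) : Prop :=
  exists E, U E /\ Sub E (Adom z) /\ Sub E (Adom z') /\
    forall w V, IsUltrafilter w V -> V E ->
      zrng z = zrng z' /\ forall F, PhiFam z V F <-> PhiFam z' V F.

Definition Sim2 (z z' : Zigzag) (v : O) (U : (M -> Prop) -> Prop) : Prop :=
  exists E, U E /\ Sub E (Adom z) /\ Sub E (Adom z') /\
    forall a b : M, E a -> (phi z a b <-> phi z' a b).

Definition Cond1 : Prop :=
  forall z z' v U, InZX z v U -> InZX z' v U -> (Sim1 z z' v U <-> Sim2 z z' v U).

Definition Cond2 : Prop :=
  forall (v : O) (E : M -> Prop), Av v E -> NonEmpty E ->
  forall a : M, E a ->
  forall mu nu : M, IsInverse mu nu -> rng mu = src a -> src mu = src a ->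
    mu <> idm (src a) ->
    exists b : M, rng b = src a /\ E (comp a b) /\
      (~ InRightIdeal b (comp mu b) \/ ~ InRightIdeal b (comp nu b)).

End Defs.

(* Call phi_zeta and phi_zeta' unit-related on E if both are defined on E and
   phi_zeta'(x) = phi_zeta(x) e_x with e_x invertible for every x in E.  Sets in
   A_v are invariant under right multiplication by invertibles, so unit-relatedness
   on a member of U_x gives (zeta, x) ~1 (zeta', x).  Conversely, under ~1 on E,
   phi_zeta'(a) lies in phi_zeta(a) Lambda for a in E: otherwise an ultrafilter
   through (a Lambda cap E) minus phi_zeta'^{-1}(phi_zeta(a) Lambda) separates
   Phi_zeta from Phi_zeta'.  By symmetry and left cancellation, ~1 is exactly
   unit-relatedness near x, and (1) says that unit-relatedness forces equality.
   (2) => (1): if e = e_a is not an identity, (2) gives b with a b in E and e b or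
   e^{-1} b outside b Lambda, whereas unit-relatedness at a b gives e b = b e' and
   e^{-1} b = b e'^{-1}.
   (1) => (2): if (2) fails for E, a, mu, the maps a d |-> d and a d |-> mu d are
   unit-related on E cap a Lambda; by (1) they agree at some a d, and right
   cancellation gives mu = s(a). *)

From Stdlib Require Import List Classical.
Import ListNotations.
From mathcomp Require classical_sets.
Set Bullet Behavior "Strict Subproofs".

Lemma last_cons {A : Type} (a : A) (l : list A) (d : A) :
  last (a :: l) d = last l a.
Proof.
  revert a d; induction l as [|b l IH]; intros a d; [reflexivity|].
  change (last (b :: l) d = last (b :: l) a); rewrite !IH; reflexivity.
Qed.

Section LeftCancellativeCategory.
Variable L : SmallCat.
Hypothesis hL : LeftCancellative L.
Local Notation M := (Mor L).

Lemma right_ideal_refl (a : M) : InRightIdeal L a a.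
Proof. exists (idm (src a)); split; [apply rng_id|symmetry; apply comp_id_r]. Qed.

Lemma IsInverse_idm (v : Obj L) : IsInverse L (idm v) (idm v).
Proof.
  pose proof (comp_id_l L (idm v)) as Hvv; rewrite rng_id in Hvv.
  unfold IsInverse; rewrite src_id, rng_id; tauto.
Qed.

Lemma IsInverse_sym {d c : M} : IsInverse L d c -> IsInverse L c d.
Proof.
  intros [H1 [H2 [H3 H4]]]; unfold IsInverse.
  repeat split; [congruence|congruence|rewrite <- H1; exact H4|rewrite H2; exact H3].
Qed.

Lemma inverse_comp_comm {d c d' c' b : M} :
  IsInverse L d c -> IsInverse L d' c' -> src d = rng b -> rng d' = src b ->
  comp d b = comp b d' -> comp c b = comp b c'.
Proof.
  intros [I1 [I2 [I3 I4]]] [J1 [J2 [J3 J4]]] Hdb Hd'b Hcomm.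
  assert (Hrd : rng d = rng b).
  { rewrite <- (rng_comp L d b), Hcomm by congruence; apply rng_comp; congruence. }
  assert (Hscb : src (comp c b) = src b) by (apply src_comp; congruence).
  assert (Hb : b = comp (comp c b) d').
  { rewrite <- comp_assoc, <- Hcomm, comp_assoc, I4, Hdb by congruence.
    symmetry; apply comp_id_l. }
  rewrite Hb at 2; rewrite <- comp_assoc, J3, Hd'b, <- Hscb by congruence.
  symmetry; apply comp_id_r.
Qed.

(** * Zigzag maps *)

Lemma zmap_src (l : list (M * M)) (x w : M) : zmap L l x w -> src w = src x.
Proof.
  revert w; induction l as [|[a b] t IH]; intros w H; simpl in H.
  - subst; reflexivity.
  - destruct H as [y [Hy [H1 [H2 H3]]]].
    rewrite <- (IH y Hy), <- (src_comp L a w) by congruence.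
    rewrite H3; apply src_comp; congruence.
Qed.

Lemma zmap_comp_r (l : list (M * M)) (x w c : M) :
  zmap L l x w -> rng c = src x -> zmap L l (comp x c) (comp w c).
Proof.
  revert w; induction l as [|[a b] t IH]; intros w H Hc; simpl in H |- *.
  - subst; reflexivity.
  - destruct H as [y [Hy [H1 [H2 H3]]]].
    assert (Sy : src y = src x) by exact (zmap_src t x y Hy).
    assert (Sw : src w = src y).
    { rewrite <- (src_comp L a w) by congruence. rewrite H3; apply src_comp; congruence. }
    exists (comp y c); split; [apply IH; assumption|].
    repeat split; try (rewrite rng_comp by congruence; assumption).
    rewrite (comp_assoc L a w c), (comp_assoc L b y c), H3 by congruence; reflexivity.
Qed.

Lemma zmap_functional (l : list (M * M)) (x w w' : M) :
  zmap L l x w -> zmap L l x w' -> w = w'.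
Proof.
  revert w w'; induction l as [|[a b] t IH]; intros w w' H H'; simpl in H, H'.
  - congruence.
  - destruct H as [y [Hy [H1 [H2 H3]]]], H' as [y' [Hy' [H1' [H2' H3']]]].
    assert (y = y') by exact (IH y y' Hy Hy'); subst y'.
    apply (hL a); congruence.
Qed.

Lemma zmap_rng (p : M * M) (t : list (M * M)) (x w : M) :
  zmap L (p :: t) x w -> rng x = src (snd (last t p)).
Proof.
  revert p w; induction t as [|q t IH]; intros [a b] w H; simpl in H.
  - destruct H as [y [Hy [H1 _]]]; subst; exact H1.
  - destruct H as [y [Hy _]]; rewrite last_cons; exact (IH q y Hy).
Qed.

Lemma phi_src {z : Zigzag L} {x w : M} : phi L z x w -> src w = src x.
Proof. apply zmap_src. Qed.

Lemma phi_rng {z : Zigzag L} {x w : M} : phi L z x w -> rng w = zrng L z.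
Proof. destruct z as [[a b] t]; intros [y [_ [_ [H _]]]]; exact H. Qed.

Lemma phi_comp_r {z : Zigzag L} {x w : M} (c : M) :
  phi L z x w -> rng c = src x -> phi L z (comp x c) (comp w c).
Proof. apply zmap_comp_r. Qed.

Lemma phi_functional {z : Zigzag L} {x w w' : M} : phi L z x w -> phi L z x w' -> w = w'.
Proof. apply zmap_functional. Qed.

Lemma Adom_rng {z : Zigzag L} {x : M} : Adom L z x -> rng x = zsrc L z.
Proof. intros [w H]; exact (zmap_rng _ _ _ _ H). Qed.

Lemma Adom_comp_r {z : Zigzag L} {x : M} (c : M) :
  Adom L z x -> rng c = src x -> Adom L z (comp x c).
Proof. intros [w H] Hc; exists (comp w c); exact (phi_comp_r c H Hc). Qed.

(* [zcons g z] is the zigzag of [sigma^g o phi_z]. *)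
Definition zcons (g : M) (z : Zigzag L) : Zigzag L :=
  ((g, idm (zrng L z)), zlist L z).

Lemma zcons_wf (g : M) (z : Zigzag L) :
  IsZigzag L z -> rng g = zrng L z -> IsZigzag L (zcons g z).
Proof.
  destruct z as [[a b] t]; unfold IsZigzag, zcons, zlist, zrng; simpl.
  intros Hz Hg; rewrite rng_id, src_id; tauto.
Qed.

Lemma zcons_src (g : M) (z : Zigzag L) : zsrc L (zcons g z) = zsrc L z.
Proof. unfold zsrc, zcons, zlist; cbn [fst snd]; rewrite last_cons; reflexivity. Qed.

Lemma Adom_zcons (g : M) (z : Zigzag L) (x : M) :
  Adom L (zcons g z) x <-> exists y, phi L z x y /\ InRightIdeal L g y.
Proof.
  split.
  - intros [w [y [Hy [H1 [H2 H3]]]]]; exists y; split; [exact Hy|].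
    exists w; split; [exact H2|].
    rewrite H3, src_id in *; rewrite <- H1; symmetry; apply comp_id_l.
  - intros [y [Hy [d [Hd ->]]]]; exists d, (comp g d); split; [exact Hy|].
    repeat split; [rewrite src_id; exact (phi_rng Hy)|exact Hd|].
    rewrite <- (phi_rng Hy), comp_id_l; reflexivity.
Qed.

(* [zshift a m] is the zigzag of [tau^m o sigma^a], which maps [a d] to [m d]. *)
Definition zshift (a m : M) : Zigzag L := ((idm (src a), m), [(a, idm (rng a))]).

Section Shift.
Variables a m : M.
Hypotheses (Hrm : rng m = src a) (Hsm : src m = src a).

Lemma zshift_wf : IsZigzag L (zshift a m).
Proof. unfold IsZigzag, zshift, zlist; simpl; rewrite !rng_id; repeat split; congruence. Qed.

Lemma zshift_src : zsrc L (zshift a m) = rng a.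
Proof. apply src_id. Qed.

Lemma phi_zshift (x w : M) :
  phi L (zshift a m) x w <->
  exists d, rng d = src a /\ x = comp a d /\ w = comp m d.
Proof.
  unfold phi, zshift, zlist; simpl; unfold zstep; rewrite !src_id; split.
  - intros [y [[y0 [-> [H1 [H2 H3]]]] [K1 [K2 K3]]]].
    exists y; repeat split; [exact H2| |].
    + rewrite H3, <- H1; symmetry; apply comp_id_l.
    + rewrite <- K3, <- K2; symmetry; apply comp_id_l.
  - intros [d [Hd [-> ->]]].
    assert (Rad : rng (comp a d) = rng a) by (apply rng_comp; congruence).
    exists d; split.
    + exists (comp a d); repeat split; [exact Rad|exact Hd|].
      rewrite <- Rad, comp_id_l; reflexivity.
    + repeat split; [congruence|rewrite rng_comp; congruence|].
      rewrite <- Hrm at 1; rewrite <- (rng_comp L m d) by congruence; apply comp_id_l.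
Qed.

Lemma Adom_zshift (x : M) : Adom L (zshift a m) x <-> InRightIdeal L a x.
Proof.
  split.
  - intros [w [d [Hd [Hx _]]]%phi_zshift]; exists d; split; assumption.
  - intros [d [Hd Hx]]; exists (comp m d); apply phi_zshift; exists d; tauto.
Qed.

End Shift.

(** * The rings A_v *)

Lemma Av_ext {v : Obj L} {E F : M -> Prop} : Av L v E -> SetEq L E F -> Av L v F.
Proof. intros [E' [HE HEE']] HEF; exists E'; split; [exact HE|firstorder]. Qed.

Lemma Av_Adom (z : Zigzag L) : IsZigzag L z -> Av L (zsrc L z) (Adom L z).
Proof.
  intros Hz; destruct (classic (NonEmpty L (Adom L z))) as [Hn|Hn].
  - exists (Adom L z); split; [apply rg_gen; exists z|]; firstorder.
  - exists (fun _ => False); split; [apply rg_empty|].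
    intro x; split; [intro Hx; apply Hn; exists x; exact Hx|tauto].
Qed.

Lemma Av_diff {v : Obj L} {E F : M -> Prop} :
  Av L v E -> Av L v F -> Av L v (fun x => E x /\ ~ F x).
Proof.
  intros [E' [HE HE']] [F' [HF HF']]; exists (fun x => E' x /\ ~ F' x).
  split; [apply rg_diff; assumption|firstorder].
Qed.

Lemma Av_inter {v : Obj L} {E F : M -> Prop} :
  Av L v E -> Av L v F -> Av L v (fun x => E x /\ F x).
Proof.
  intros HE HF; apply (Av_ext (Av_diff HE (Av_diff HE HF))).
  intro x; destruct (classic (F x)); tauto.
Qed.

Lemma Av_rng {v : Obj L} {E : M -> Prop} {x : M} : Av L v E -> E x -> rng x = v.
Proof.
  intros [E' [HE HEE']] Hx; apply HEE' in Hx; clear HEE'; revert x Hx.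
  induction HE as [G [z [_ [Hs [_ HGz]]]]| |G1 G2 _ IH1 _ IH2|G1 G2 _ IH1 _ _];
    intros x Hx.
  - rewrite <- Hs; exact (Adom_rng (proj1 (HGz x) Hx)).
  - contradiction.
  - destruct Hx; auto.
  - exact (IH1 x (proj1 Hx)).
Qed.

Lemma Av_right_ideal (a : M) : Av L (rng a) (InRightIdeal L a).
Proof.
  assert (Hr : rng (idm (src a)) = src a) by apply rng_id.
  assert (Hs : src (idm (src a)) = src a) by apply src_id.
  rewrite <- (zshift_src a (idm (src a))).
  apply (Av_ext (Av_Adom _ (zshift_wf _ _ Hr Hs))).
  exact (Adom_zshift _ _ Hr Hs).
Qed.

(** * Units acting on the right *)

Definition UnitMultiple (y y' : M) : Prop :=
  exists e f, IsInverse L e f /\ rng e = src y /\ y' = comp y e.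

Lemma UnitMultiple_refl (y : M) : UnitMultiple y y.
Proof.
  exists (idm (src y)), (idm (src y)).
  split; [apply IsInverse_idm|split; [apply rng_id|symmetry; apply comp_id_r]].
Qed.

Lemma UnitMultiple_sym {y y' : M} : UnitMultiple y y' -> UnitMultiple y' y.
Proof.
  intros [e [f [Hinv [He ->]]]]; pose proof Hinv as [I1 [I2 [I3 I4]]].
  exists f, e; split; [exact (IsInverse_sym Hinv)|split; [rewrite src_comp; congruence|]].
  rewrite <- comp_assoc, I3, He by congruence; symmetry; apply comp_id_r.
Qed.

Lemma Adom_UnitMultiple {z : Zigzag L} {y y' : M} :
  Adom L z y -> UnitMultiple y y' -> Adom L z y'.
Proof. intros Hy [e [f [_ [He ->]]]]; exact (Adom_comp_r e Hy He). Qed.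

Lemma Av_UnitMultiple {v : Obj L} {F : M -> Prop} {y y' : M} :
  Av L v F -> UnitMultiple y y' -> F y -> F y'.
Proof.
  intros [F' [HF HFF']] Hyy'; rewrite (HFF' y), (HFF' y'); clear HFF'.
  revert y y' Hyy'.
  induction HF as [G [z [_ [_ [_ HGz]]]]| |G1 G2 _ IH1 _ IH2|G1 G2 _ IH1 _ IH2];
    intros y y' Hyy' Hy.
  - apply HGz in Hy; apply HGz; exact (Adom_UnitMultiple Hy Hyy').
  - exact Hy.
  - destruct Hy as [Hy|Hy]; [left; exact (IH1 _ _ Hyy' Hy)|right; exact (IH2 _ _ Hyy' Hy)].
  - destruct Hy as [Hy Hny]; split; [exact (IH1 _ _ Hyy' Hy)|].
    intro Hy'; exact (Hny (IH2 _ _ (UnitMultiple_sym Hyy') Hy')).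
Qed.

Lemma right_ideal_inverse {mu nu d : M} :
  IsInverse L mu nu -> src mu = rng d -> rng mu = rng d ->
  InRightIdeal L d (comp nu d) -> InRightIdeal L (comp mu d) d.
Proof.
  intros [I1 [I2 [I3 I4]]] Hs Hr [f [Hf Hnd]].
  exists f; split; [rewrite src_comp; congruence|].
  rewrite <- comp_assoc, <- Hnd, comp_assoc, I3, Hr by (try rewrite src_comp; congruence).
  symmetry; apply comp_id_l.
Qed.

Lemma UnitMultiple_of_right_ideals {g g' : M} :
  InRightIdeal L g g' -> InRightIdeal L g' g -> UnitMultiple g g'.
Proof.
  intros [d [Hd Hg']] [c [Hc Hg]].
  assert (Hsd : src d = src g') by (rewrite Hg'; symmetry; apply src_comp; congruence).
  assert (Hsc : src c = src g) by (rewrite Hg; symmetry; apply src_comp; congruence).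
  exists d, c; repeat split; [congruence|congruence| | |exact Hd|exact Hg'].
  - rewrite Hd; apply (hL g); [rewrite rng_comp; congruence|rewrite rng_id; reflexivity|].
    rewrite comp_assoc, <- Hg', <- Hg by congruence; symmetry; apply comp_id_r.
  - rewrite Hsd; apply (hL g'); [rewrite rng_comp; congruence|rewrite rng_id; reflexivity|].
    rewrite comp_assoc, <- Hg, <- Hg' by congruence; symmetry; apply comp_id_r.
Qed.

(** * Filters and ultrafilters *)

Lemma filter_Av {v U} {E : M -> Prop} : IsFilter L v U -> U E -> Av L v E.
Proof. intros HU HE; exact (proj1 (proj1 (proj2 HU) E HE)). Qed.

Lemma filter_ne {v U} {E : M -> Prop} : IsFilter L v U -> U E -> NonEmpty L E.
Proof. intros HU HE; exact (proj2 (proj1 (proj2 HU) E HE)). Qed.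

Lemma filter_inter {v U} {E F : M -> Prop} :
  IsFilter L v U -> U E -> U F -> U (fun x => E x /\ F x).
Proof. intro HU; apply HU. Qed.

Lemma filter_up {v U} {E F : M -> Prop} :
  IsFilter L v U -> U E -> Av L v F -> Sub L E F -> U F.
Proof. intro HU; apply HU. Qed.

Lemma filter_bigcup_chain {v} {C : ((M -> Prop) -> Prop) -> Prop} {X0 E0} :
  (forall X E, C X -> X E -> IsFilter L v X) ->
  classical_sets.total_on C (@classical_sets.subset _) -> C X0 -> X0 E0 ->
  IsFilter L v (classical_sets.bigcup C (fun X => X)).
Proof.
  intros HC Htot HX0 HE0; split; [|split; [|split]].
  - exists E0, X0; assumption.
  - intros E [X HX HE]; pose proof (HC X E HX HE) as HX'.
    exact (conj (filter_Av HX' HE) (filter_ne HX' HE)).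
  - intros E F [X HX HE] [Y HY HF]; destruct (Htot X Y HX HY) as [HXY|HYX].
    + exists Y; [exact HY|exact (filter_inter (HC Y F HY HF) (HXY E HE) HF)].
    + exists X; [exact HX|exact (filter_inter (HC X E HX HE) HE (HYX F HF))].
  - intros E F [X HX HE] HF HEF; exists X; [exact HX|].
    exact (filter_up (HC X E HX HE) HE HF HEF).
Qed.

Lemma principal_filter {v S} :
  Av L v S -> NonEmpty L S -> IsFilter L v (fun E => Av L v E /\ Sub L S E).
Proof.
  intros HS [s Hs]; split; [|split; [|split]].
  - exists S; split; [exact HS|intros x Hx; exact Hx].
  - intros E [HE HSE]; split; [exact HE|exists s; exact (HSE s Hs)].
  - intros E F [HE HSE] [HF HSF]; split; [exact (Av_inter HE HF)|firstorder].
  - intros E F [HE HSE] HF HEF; split; [exact HF|firstorder].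
Qed.

Lemma ultrafilter_exists {v : Obj L} {S : M -> Prop} :
  Av L v S -> NonEmpty L S -> exists U, IsUltrafilter L v U /\ U S.
Proof.
  intros HS HSn.
  set (P := fun A : (M -> Prop) -> Prop => forall E, A E -> IsFilter L v A /\ A S).
  assert (Hchain : forall C, classical_sets.subset C P ->
            classical_sets.total_on C (@classical_sets.subset _) ->
            P (classical_sets.bigcup C (fun X => X))).
  { intros C HCP Htot E0 [X0 HX0 HE0]; split.
    - exact (filter_bigcup_chain (fun X E HX HE => proj1 (HCP X HX E HE)) Htot HX0 HE0).
    - exists X0; [exact HX0|exact (proj2 (HCP X0 HX0 E0 HE0))]. }
  destruct (classical_sets.Zorn_bigcup Hchain) as [A [HPA Hmax]].
  (* A maximal [A] cannot be empty, as the principal filter of [S] would extend it. *)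
  assert (HAS : A S).
  { apply NNPP; intro HnS; apply (Hmax (fun E => Av L v E /\ Sub L S E)).
    - split; [intros E HE; exfalso; exact (HnS (proj2 (HPA E HE)))|].
      intro HPrA; apply HnS, HPrA; split; [exact HS|intros x Hx; exact Hx].
    - intros E _; split; [exact (principal_filter HS HSn)|].
      split; [exact HS|intros x Hx; exact Hx]. }
  exists A; destruct (HPA S HAS) as [HA _]; split; [split; [exact HA|]|exact HAS].
  intros U' HU' HAU' E HE; apply NNPP; intro HnE; apply (Hmax U').
  - split; [exact HAU'|intro HU'A; exact (HnE (HU'A E HE))].
  - intros E' _; split; [exact HU'|exact (HAU' S HAS)].
Qed.

(** * The relations ~1 and ~2 *)

Definition UnitRelatedOn (z z' : Zigzag L) (E : M -> Prop) : Prop :=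
  Sub L E (Adom L z) /\ Sub L E (Adom L z') /\
  forall x y y', E x -> phi L z x y -> phi L z' x y' -> UnitMultiple y y'.

Lemma UnitRelatedOn_sym {z z' E} : UnitRelatedOn z z' E -> UnitRelatedOn z' z E.
Proof.
  intros [Hd [Hd' Hunit]]; split; [exact Hd'|split; [exact Hd|]].
  intros x y y' Hx Hy Hy'; exact (UnitMultiple_sym (Hunit x y' y Hx Hy' Hy)).
Qed.

Lemma PhiFam_UnitRelatedOn {z z' E w V F} :
  IsFilter L w V -> V E -> UnitRelatedOn z z' E -> zrng L z = zrng L z' ->
  PhiFam L z V F -> PhiFam L z' V F.
Proof.
  intros HV HVE [Hd [_ Hunit]] Hr [HF [E1 [HE1 Hsub]]].
  split; [rewrite <- Hr; exact HF|].
  exists (fun x => E1 x /\ E x); split; [exact (filter_inter HV HE1 HVE)|].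
  intros y' [x [[Hx1 Hx] [_ Hy']]]; destruct (Hd x Hx) as [y Hy].
  apply (Av_UnitMultiple HF (Hunit x y y' Hx Hy Hy')), Hsub.
  exists x; split; [exact Hx1|split; [exists y; exact Hy|exact Hy]].
Qed.

Lemma Sim1_of_UnitRelatedOn {z z' v U E} :
  IsFilter L v U -> U E -> UnitRelatedOn z z' E -> Sim1 L z z' v U.
Proof.
  intros HU HUE Hrel; pose proof Hrel as [Hd [Hd' Hunit]].
  assert (Hr : zrng L z = zrng L z').
  { destruct (filter_ne HU HUE) as [x Hx].
    destruct (Hd x Hx) as [y Hy], (Hd' x Hx) as [y' Hy'].
    destruct (Hunit x y y' Hx Hy Hy') as [e [_ [_ [He ->]]]].
    rewrite <- (phi_rng Hy), <- (phi_rng Hy'); symmetry; apply rng_comp; congruence. }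
  exists E; split; [exact HUE|split; [exact Hd|split; [exact Hd'|]]].
  intros w V [HV _] HVE; split; [exact Hr|intro F; split].
  - exact (PhiFam_UnitRelatedOn HV HVE Hrel Hr).
  - exact (PhiFam_UnitRelatedOn HV HVE (UnitRelatedOn_sym Hrel) (eq_sym Hr)).
Qed.

Lemma UnitRelatedOn_of_Sim2 {z z' v U} :
  Sim2 L z z' v U -> exists E, U E /\ UnitRelatedOn z z' E.
Proof.
  intros [E [HE [Hd [Hd' Heq]]]].
  exists E; split; [exact HE|split; [exact Hd|split; [exact Hd'|]]].
  intros x y y' Hx Hy Hy'.
  rewrite (phi_functional (proj1 (Heq x y Hx) Hy) Hy'); apply UnitMultiple_refl.
Qed.

(* If [g'] were outside [g Lambda], an ultrafilter through [a Lambda cap E0] that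
   avoids [phi_z'^{-1}(g Lambda)] would have [g Lambda] in its [Phi_z]-image only. *)
Lemma right_ideal_of_PhiFam_incl {z z' v} {E0 : M -> Prop} :
  IsZigzag L z' -> zsrc L z' = v -> Av L v E0 -> Sub L E0 (Adom L z') ->
  zrng L z = zrng L z' ->
  (forall V, IsUltrafilter L v V -> V E0 -> forall F, PhiFam L z V F -> PhiFam L z' V F) ->
  forall a g g', E0 a -> phi L z a g -> phi L z' a g' -> InRightIdeal L g g'.
Proof.
  intros Hz' Hs' HE0 Hd' Hr Hincl a g g' Ha Hg Hg'.
  apply NNPP; intro Hn.
  assert (Hzg : IsZigzag L (zcons g z'))
    by (apply zcons_wf; [exact Hz'|rewrite (phi_rng Hg); exact Hr]).
  assert (Hra : rng a = v) by exact (Av_rng HE0 Ha).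
  assert (HI : Av L v (fun x => InRightIdeal L a x /\ E0 x))
    by (apply Av_inter; [rewrite <- Hra; apply Av_right_ideal|exact HE0]).
  set (S := fun x => (InRightIdeal L a x /\ E0 x) /\ ~ Adom L (zcons g z') x).
  assert (HS : Av L v S).
  { apply (Av_diff HI); rewrite <- Hs', <- (zcons_src g z'); exact (Av_Adom _ Hzg). }
  assert (HaS : S a).
  { split; [split; [apply right_ideal_refl|exact Ha]|].
    intros [y [Hy Hgy]]%Adom_zcons; apply Hn; rewrite <- (phi_functional Hy Hg'); exact Hgy. }
  destruct (ultrafilter_exists HS (ex_intro _ a HaS)) as [V [HV HVS]].
  assert (HVI : V (fun x => InRightIdeal L a x /\ E0 x))
    by (apply (filter_up (proj1 HV) HVS HI); intros x Hx; exact (proj1 Hx)).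
  assert (HVE0 : V E0)
    by (apply (filter_up (proj1 HV) HVS HE0); intros x Hx; exact (proj2 (proj1 Hx))).
  assert (Hgz : PhiFam L z V (InRightIdeal L g)).
  { split; [rewrite <- (phi_rng Hg); apply Av_right_ideal|].
    exists (fun x => InRightIdeal L a x /\ E0 x); split; [exact HVI|].
    intros b [x [[[d [Hd ->]] _] [_ Hb]]].
    rewrite (phi_functional Hb (phi_comp_r d Hg Hd)).
    exists d; split; [rewrite (phi_src Hg); exact Hd|reflexivity]. }
  destruct (Hincl V HV HVE0 _ Hgz) as [_ [E1 [HE1 Hsub]]].
  destruct (filter_ne (proj1 HV) (filter_inter (proj1 HV) HE1 HVS)) as [x [Hx1 [[_ Hx0] HxS]]].
  apply HxS, Adom_zcons; destruct (Hd' x Hx0) as [y Hy].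
  exists y; split; [exact Hy|]; apply Hsub.
  exists x; split; [exact Hx1|split; [exists y; exact Hy|exact Hy]].
Qed.

Lemma UnitRelatedOn_of_Sim1 {z z' v U} :
  InZX L z v U -> InZX L z' v U -> Sim1 L z z' v U ->
  exists E, U E /\ UnitRelatedOn z z' E.
Proof.
  intros [Hz [Hs [HU _]]] [Hz' [Hs' _]] [E [HE [Hd [Hd' Hsim]]]].
  assert (Hr : zrng L z = zrng L z') by exact (proj1 (Hsim v U HU HE)).
  assert (HEv : Av L v E) by exact (filter_Av (proj1 HU) HE).
  exists E; split; [exact HE|split; [exact Hd|split; [exact Hd'|]]].
  intros x y y' Hx Hy Hy'; apply UnitMultiple_of_right_ideals.
  - refine (right_ideal_of_PhiFam_incl Hz' Hs' HEv Hd' Hr _ x y y' Hx Hy Hy').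
    intros V HV HVE F; apply (proj2 (Hsim v V HV HVE)).
  - refine (right_ideal_of_PhiFam_incl Hz Hs HEv Hd (eq_sym Hr) _ x y' y Hx Hy' Hy).
    intros V HV HVE F; apply (proj2 (Hsim v V HV HVE)).
Qed.

(** * The two implications *)

Lemma UnitRelatedOn_eq (HC : Cond2 L) {z z' v E} :
  Av L v E -> UnitRelatedOn z z' E ->
  forall x y y', E x -> phi L z x y -> phi L z' x y' -> y = y'.
Proof.
  intros HE [_ [_ Hunit]] x y y' Hx Hy Hy'.
  destruct (Hunit x y y' Hx Hy Hy') as [e [f [Hinv [He ->]]]].
  pose proof (phi_src Hy) as Hsy; pose proof (phi_src Hy') as Hsy'.
  rewrite src_comp in Hsy' by congruence.
  destruct (classic (e = idm (src x))) as [->|Hne].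
  { rewrite <- Hsy; symmetry; apply comp_id_r. }
  exfalso.
  destruct (HC v E HE (ex_intro _ x Hx) x Hx e f Hinv ltac:(congruence) Hsy' Hne)
    as [b [Hb [Hxb Hnot]]].
  destruct (Hunit _ _ _ Hxb (phi_comp_r b Hy Hb) (phi_comp_r b Hy' Hb))
    as [e' [f' [Hinv' [He' Hyeb]]]].
  rewrite src_comp in He' by congruence.
  assert (Hcomm : comp e b = comp b e').
  { apply (hL y); [rewrite rng_comp; congruence|rewrite rng_comp; congruence|].
    rewrite !comp_assoc by congruence; exact Hyeb. }
  destruct Hnot as [Hn|Hn]; apply Hn.
  - exists e'; split; [exact He'|exact Hcomm].
  - pose proof Hinv' as [J1 [J2 _]].
    assert (Hse' : src e' = src b).
    { rewrite <- (src_comp L b e'), <- Hcomm by congruence; apply src_comp; congruence. }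
    exists f'; split; [congruence|].
    exact (inverse_comp_comm Hinv Hinv' (eq_trans Hsy' (eq_sym Hb)) He' Hcomm).
Qed.

Lemma Cond1_of_Cond2 : Cond2 L -> Cond1 L.
Proof.
  intros HC z z' v U HZ HZ'; pose proof HZ as [_ [_ [[HU _] _]]]; split.
  - intro Hsim; destruct (UnitRelatedOn_of_Sim1 HZ HZ' Hsim) as [E [HE Hrel]].
    pose proof Hrel as [Hd [Hd' _]].
    pose proof (UnitRelatedOn_eq HC (filter_Av HU HE) Hrel) as Heq.
    exists E; split; [exact HE|split; [exact Hd|split; [exact Hd'|]]].
    intros x b Hx; split; intro Hb.
    + destruct (Hd' x Hx) as [y' Hy']; rewrite (Heq x b y' Hx Hb Hy'); exact Hy'.
    + destruct (Hd x Hx) as [y Hy]; rewrite <- (Heq x y b Hx Hy Hb); exact Hy.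
  - intro Hsim; destruct (UnitRelatedOn_of_Sim2 Hsim) as [E [HE Hrel]].
    exact (Sim1_of_UnitRelatedOn HU HE Hrel).
Qed.

Lemma InZX_zshift {a m : M} {U} :
  rng m = src a -> src m = src a -> IsUltrafilter L (rng a) U ->
  U (InRightIdeal L a) -> InZX L (zshift a m) (rng a) U.
Proof.
  intros Hrm Hsm HU Ha; pose proof (zshift_wf _ _ Hrm Hsm) as Hz.
  split; [exact Hz|split; [apply zshift_src|split; [exact HU|]]].
  apply (filter_up (proj1 HU) Ha).
  - rewrite <- (zshift_src a m); exact (Av_Adom _ Hz).
  - intros x Hx; exact (proj2 (Adom_zshift _ _ Hrm Hsm x) Hx).
Qed.

Lemma zshift_UnitRelatedOn {a mu nu : M} {E : M -> Prop} :
  IsInverse L mu nu -> rng mu = src a -> src mu = src a ->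
  (forall d, rng d = src a -> E (comp a d) ->
     InRightIdeal L d (comp mu d) /\ InRightIdeal L d (comp nu d)) ->
  UnitRelatedOn (zshift a (idm (src a))) (zshift a mu) (fun x => E x /\ InRightIdeal L a x).
Proof.
  intros Hinv Hr Hs Hideals.
  pose proof (rng_id L (src a)) as Hri; pose proof (src_id L (src a)) as Hsi.
  split; [|split].
  - intros x [_ Hx]; exact (proj2 (Adom_zshift _ _ Hri Hsi x) Hx).
  - intros x [_ Hx]; exact (proj2 (Adom_zshift _ _ Hr Hs x) Hx).
  - intros x y y' [Hx _] Hy Hy'.
    apply (phi_zshift _ _ Hri Hsi) in Hy as [d [Hd [-> ->]]].
    apply (phi_zshift _ _ Hr Hs) in Hy' as [d' [Hd' [Hdd' ->]]].
    apply hL in Hdd'; [subst d'|congruence|congruence].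
    rewrite <- Hd, comp_id_l; destruct (Hideals d Hd Hx) as [Hmu Hnu].
    apply (UnitMultiple_of_right_ideals Hmu).
    exact (right_ideal_inverse Hinv (eq_trans Hs (eq_sym Hd)) (eq_trans Hr (eq_sym Hd)) Hnu).
Qed.

Lemma Cond2_of_Cond1 : RightCancellative L -> Cond1 L -> Cond2 L.
Proof.
  intros hR HC1 v E HE _ a Ha mu nu Hinv Hr Hs Hne; apply NNPP; intro Hno.
  assert (Hideals : forall d, rng d = src a -> E (comp a d) ->
            InRightIdeal L d (comp mu d) /\ InRightIdeal L d (comp nu d)).
  { intros d Hd Had; split; apply NNPP; intro Hn; apply Hno; exists d; tauto. }
  pose proof (Av_rng HE Ha) as Hra; subst v.
  set (S := fun x => E x /\ InRightIdeal L a x).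
  assert (HS : Av L (rng a) S) by exact (Av_inter HE (Av_right_ideal a)).
  destruct (ultrafilter_exists HS (ex_intro _ a (conj Ha (right_ideal_refl a))))
    as [U [HU HUS]].
  assert (HUa : U (InRightIdeal L a))
    by (apply (filter_up (proj1 HU) HUS (Av_right_ideal a)); intros x Hx; exact (proj2 Hx)).
  pose proof (rng_id L (src a)) as Hri; pose proof (src_id L (src a)) as Hsi.
  destruct (proj1 (HC1 _ _ _ U (InZX_zshift Hri Hsi HU HUa) (InZX_zshift Hr Hs HU HUa))
              (Sim1_of_UnitRelatedOn (proj1 HU) HUS (zshift_UnitRelatedOn Hinv Hr Hs Hideals)))
    as [E2 [HE2 [_ [_ Hagree]]]].
  destruct (filter_ne (proj1 HU) (filter_inter (proj1 HU) HE2 HUS))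
    as [x [Hx2 [_ [d [Hd ->]]]]].
  assert (Hid : phi L (zshift a (idm (src a))) (comp a d) (comp (idm (src a)) d))
    by (apply (phi_zshift _ _ Hri Hsi); exists d; tauto).
  assert (Hmu : phi L (zshift a mu) (comp a d) (comp mu d))
    by (apply (phi_zshift _ _ Hr Hs); exists d; tauto).
  apply Hne; symmetry; apply (hR d); [congruence|congruence|].
  exact (phi_functional (proj1 (Hagree _ _ Hx2) Hid) Hmu).
Qed.

End LeftCancellativeCategory.

Theorem mainTheorem8 (L : SmallCat) (hL : LeftCancellative L) :
  (Cond2 L -> Cond1 L) /\ (RightCancellative L -> Cond1 L -> Cond2 L).
Proof. split; [apply Cond1_of_Cond2|apply Cond2_of_Cond1]; exact hL. Qed.
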